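(* Consider a training set of samples, each consisting of an ILP instance with bipartite representation $\mathcal{A}=\begin{bmatrix}\mathbf{A}&\mathbf{b}\\ \mathbf{c}^\top&0\end{bmatrix}$ ($\mathbf{A}\in\mathbb{R}^{m\times n}$), an augmented feature vector $\mathbf{z}\in\mathbb{R}^n$, and a label $\bar{\mathbf{x}}\in\mathbb{R}^n$; the model input is the augmented representation $\tilde{\mathcal{A}}=\begin{bmatrix}\mathbf{A}&\mathbf{b}\\ \mathbf{c}^\top&0\\ \mathbf{z}^\top&0\end{bmatrix}\in\mathbb{R}^{(m+2)\times(n+1)}$. Let $\ell\ge 0$ be a loss function that is permutation-invariant ($\ell(\pi^v(\mathbf{a}),\pi^v(\mathbf{b}))=\ell(\mathbf{a},\mathbf{b})$ for all $\pi\in S_n$) and has the identity property ($\ell(\mathbf{a},\mathbf{b})=0\iff \mathbf{a}=\mathbf{b}$). Suppose the augmented features violate isomorphic consistency, i.e., there are two samples $(\mathcal{A},\mathbf{z},\bar{\mathbf{x}})$ and $(\mathcal{A}',\mathbf{z}',\bar{\mathbf{x}}')$ and permutations $\pi\in S_n$, $\sigma\in S_m$ with $\pi^c(\sigma^r(\mathcal{A}))=\mathcal{A}'$ and $\pi^v(\mathbf{z})=\mathbf{z}'$ but $\pi^v(\bar{\mathbf{x}})\neq\bar{\mathbf{x}}'$. Then for every model $f_\theta$ mapping augmented representations to $\mathbb{R}^n$ that satisfies $f_\theta(\pi^c(\tilde{\mathcal{M}}))=\pi^v(f_\theta(\tilde{\mathcal{M}}))$ for all $\pi\in S_n$ and $f_\theta(\sigma^r(\tilde{\mathcal{M}}))=f_\theta(\tilde{\mathcal{M}})$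 for all $\sigma\in S_m$, the total training loss $\sum_{\text{samples}}\ell(f_\theta(\tilde{\mathcal{A}}),\bar{\mathbf{x}})$ is strictly positive; that is, the minimal loss cannot be $0$.
   Context: $S_n$ is the set of permutations of $\{1,\dots,n\}$. For $\pi\in S_n$: $\pi^v(\mathbf{y})=[y_{\pi(1)},\dots,y_{\pi(n)},y_{n+1},\dots]^\top$ permutes the top-most $n$ entries of a vector; $\pi^c(\mathbf{X})=[\mathbf{X}_{:,\pi(1)},\dots,\mathbf{X}_{:,\pi(n)},\mathbf{X}_{:,n+1},\dots]$ permutes the left-most $n$ columns of a matrix; for $\sigma\in S_m$, $\sigma^r(\mathbf{X})=[\mathbf{X}_{\sigma(1),:},\dots,\mathbf{X}_{\sigma(m),:},\mathbf{X}_{m+1,:},\dots]^\top$ permutes the top-most $m$ rows. The principle of isomorphic consistency requires: whenever two samples have instances with $\pi^c(\sigma^r(\mathcal{A}))=\mathcal{A}'$ for some $\pi\in S_n,\sigma\in S_m$, then $\pi^v(\mathbf{z})=\mathbf{z}'$ implies $\pi^v(\bar{\mathbf{x}})=\bar{\mathbf{x}}'$. *)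

From HB Require Import structures.
From mathcomp Require Import all_boot all_order all_algebra all_fingroup.
Set Implicit Arguments. Unset Strict Implicit. Unset Printing Implicit Defensive.
Import Order.TTheory GRing.Theory Num.Theory.
Local Open Scope ring_scope.

Definition ext_ord (n k : nat) (s : 'S_n) (j : 'I_(n + k)) : 'I_(n + k) :=
  match split j with
  | inl a => lshift k (s a)
  | inr b => rshift n b
  end.

Definition permv (R : Type) (n : nat) (s : 'S_n) (y : 'rV[R]_n) : 'rV[R]_n :=
  \row_j y 0 (s j).

Definition permc (R : Type) (p n k : nat) (s : 'S_n) (X : 'M[R]_(p, n + k))
  : 'M[R]_(p, n + k) :=
  \matrix_(i, j) X i (ext_ord s j).

Definition permr (R : Type) (m k q : nat) (s : 'S_m) (X : 'M[R]_(m + k, q))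
  : 'M[R]_(m + k, q) :=
  \matrix_(i, j) X (ext_ord s i) j.

Record sample (R : Type) (m n : nat) := Sample {
  sA : 'M[R]_(m, n);
  sb : 'cV[R]_m;
  sc : 'rV[R]_n;
  sz : 'rV[R]_n;
  sx : 'rV[R]_n }.

Definition bip (R : nzRingType) (m n : nat) (s : sample R m n) : 'M[R]_(m + 1, n + 1) :=
  block_mx (sA s) (sb s) (sc s) 0.

Definition aug (R : nzRingType) (m n : nat) (s : sample R m n)
  : 'M[R]_(m + 2, n + 1) :=
  castmx (esym (addnA m 1 1), erefl (n + 1)) (col_mx (bip s) (row_mx (sz s) 0)).

From HB Require Import structures.
From mathcomp Require Import all_boot all_order all_algebra all_fingroup.

Set Implicit Arguments.
Unset Strict Implicit.
Unset Printing Implicit Defensive.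

Import Order.TTheory GRing.Theory Num.Theory.
Local Open Scope ring_scope.

(* The augmented representation is built from blocks of the bipartite one plus
   the row [z 0]; hence an isomorphism (pi, sigma) between two instances that
   also maps z to z' maps one augmented representation onto the other.  An
   equivariant and invariant model then predicts pi^v(f(A~)) on the second
   sample, so zero loss on both samples would force pi^v(x) = x'. *)

Lemma ext_ord_lshift n k (s : 'S_n) (a : 'I_n) :
  ext_ord s (lshift k a) = lshift k (s a).
Proof.
rewrite /ext_ord; case: splitP => [a' /= /val_inj -> // | b' /= E].
by have := ltn_ord a; rewrite E ltnNge leq_addr.
Qed.

Lemma ext_ord_rshift n k (s : 'S_n) (b : 'I_k) :
  ext_ord s (rshift n b) = rshift n b.
Proof.
rewrite /ext_ord; case: splitP => [a' /= E | b' /= /eqP].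
  by have := ltn_ord a'; rewrite -E ltnNge leq_addr.
by rewrite eqn_add2l => /eqP/val_inj ->.
Qed.

Section BlockPermutations.

Variable R : Type.

Lemma permv_col_perm n (s : 'S_n) (y : 'rV[R]_n) : permv s y = col_perm s y.
Proof. by apply/matrixP => i j; rewrite !mxE (ord1 i). Qed.

Lemma permc_row_mx p n k (s : 'S_n) (A : 'M[R]_(p, n)) (B : 'M[R]_(p, k)) :
  permc s (row_mx A B) = row_mx (col_perm s A) B.
Proof.
apply/matrixP => i j; rewrite mxE.
case: (splitP j) => [a | b] E.
  by rewrite (_ : j = lshift k a) ?ext_ord_lshift ?row_mxEl ?mxE //; exact: val_inj.
by rewrite (_ : j = rshift n b) ?ext_ord_rshift ?row_mxEr //; exact: val_inj.
Qed.

Lemma permc_col_mx p q n k (s : 'S_n)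
    (A : 'M[R]_(p, n + k)) (B : 'M[R]_(q, n + k)) :
  permc s (col_mx A B) = col_mx (permc s A) (permc s B).
Proof.
apply/matrixP => i j; rewrite mxE.
case: (splitP i) => [a | b] E.
  by rewrite (_ : i = lshift q a) ?col_mxEu ?mxE //; exact: val_inj.
by rewrite (_ : i = rshift p b) ?col_mxEd ?mxE //; exact: val_inj.
Qed.

Lemma permr_col_mx m k q (s : 'S_m) (A : 'M[R]_(m, q)) (B : 'M[R]_(k, q)) :
  permr s (col_mx A B) = col_mx (row_perm s A) B.
Proof.
apply/matrixP => i j; rewrite mxE.
case: (splitP i) => [a | b] E.
  by rewrite (_ : i = lshift k a) ?ext_ord_lshift ?col_mxEu ?mxE //; exact: val_inj.
by rewrite (_ : i = rshift m b) ?ext_ord_rshift ?col_mxEd //; exact: val_inj.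
Qed.

End BlockPermutations.

Section Representations.

Variables (R : nzRingType) (m n : nat).

Lemma aug_col_mx (s : sample R m n) :
  aug s = col_mx (row_mx (sA s) (sb s))
                 (col_mx (row_mx (sc s) 0) (row_mx (sz s) 0)) :> 'M_(m + 2, n + 1).
Proof. by rewrite col_mxA. Qed.

Lemma aug_perm (pi : 'S_n) (sigma : 'S_m) (s s' : sample R m n) :
    permc pi (permr sigma (bip s)) = bip s' ->
    permv pi (sz s) = sz s' ->
  aug s' = permc pi (permr sigma (aug s)).
Proof.
rewrite /bip /block_mx permr_col_mx permc_col_mx => /eq_col_mx[top_eq c_eq] z_eq.
(* The two bottom rows form a block of height [1 + 1], not inferable from [2]. *)
rewrite !aug_col_mx permr_col_mx permc_col_mx (@permc_col_mx _ 1 1) top_eq c_eq.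
by rewrite permc_row_mx -permv_col_perm z_eq.
Qed.

End Representations.

Theorem proposition2 (R : realFieldType) (m n N : nat)
  (D : 'I_N -> sample R m n)
  (loss : 'rV[R]_n -> 'rV[R]_n -> R)
  (loss_ge0 : forall a b, 0 <= loss a b)
  (loss_perm : forall (p : 'S_n) a b, loss (permv p a) (permv p b) = loss a b)
  (loss_id : forall a b, loss a b = 0 <-> a = b)
  (i j : 'I_N) (pi : 'S_n) (sigma : 'S_m)
  (Hiso : permc pi (permr sigma (bip (D i))) = bip (D j))
  (Hz : permv pi (sz (D i)) = sz (D j))
  (Hx : permv pi (sx (D i)) <> sx (D j))
  (f : 'M[R]_(m + 2, n + 1) -> 'rV[R]_n)
  (f_equiv : forall (p : 'S_n) (M : 'M[R]_(m + 2, n + 1)),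
      f (permc p M) = permv p (f M))
  (f_inv : forall (s : 'S_m) (M : 'M[R]_(m + 2, n + 1)),
      f (permr s M) = f M) :
  0 < \sum_(k < N) loss (f (aug (D k))) (sx (D k)).
Proof.
rewrite lt_def sumr_ge0 ?andbT //; apply: contra_notN Hx.
rewrite psumr_eq0 // => /allP loss0.
have fit k : f (aug (D k)) = sx (D k).
  by apply/loss_id/eqP/loss0; rewrite mem_index_enum.
by rewrite -!fit (aug_perm Hiso Hz) f_equiv f_inv.
Qed.
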